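(* Let $A$ be a commutative ring, $S\subseteq A$ a multiplicative system, and assume that the localisation $A[S^{-1}]$ satisfies $\mathrm{AFSR}_d$. Then for any row $(b_1,\ldots,b_d)$ with entries in $A[S^{-1}]$ and any $s\in S$, there exist $c_1,\ldots,c_{d-1}\in sA$ (i.e. images in $A[S^{-1}]$ of elements $sa$, $a\in A$) such that every maximal ideal of $A[S^{-1}]$ containing the ideal $\langle b_1+c_1b_d,\ldots,b_{d-1}+c_{d-1}b_d\rangle$ already contains the ideal $\langle b_1,\ldots,b_d\rangle$.
   Context: For a commutative ring $R$ with unit group $R^*$, $R$ satisfies $\mathrm{AFSR}_d$ if for any row $(b_1,\ldots,b_d)$ with entries in $R$ there exists $c_1\in R$ such that for any $\varepsilon_1\in R^*$ there exists $c_2\in R$ such that for any $\varepsilon_2\in R^*$, \ldots, there exists $c_{d-1}\in R$ such that for any $\varepsilon_{d-1}\in R^*$, every maximal ideal of $R$ containing $\langle b_1+\varepsilon_1c_1b_d,\ldots,b_{d-1}+\varepsilon_{d-1}c_{d-1}b_d\rangle$ already contains $\langle b_1,\ldots,b_d\rangle$. *)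

From HB Require Import structures.
From mathcomp Require Import all_boot all_order all_algebra.
Set Implicit Arguments. Unset Strict Implicit. Unset Printing Implicit Defensive.
Import GRing.Theory.
Local Open Scope ring_scope.

Definition is_unit (R : comPzRingType) (x : R) : Prop := exists y : R, x * y = 1.

Definition is_ideal (R : comPzRingType) (I : R -> Prop) : Prop :=
  [/\ I 0, (forall x y, I x -> I y -> I (x + y)) & (forall r x, I x -> I (r * x))].

Definition is_maximal_ideal (R : comPzRingType) (M : R -> Prop) : Prop :=
  [/\ is_ideal M, ~ M 1 &
      forall N : R -> Prop, is_ideal N -> (forall x, M x -> N x) ->
        N 1 \/ (forall x, N x -> M x)].

Definition gen_ideal (R : comPzRingType) (m : nat) (x : nat -> R) : R -> Prop :=
  fun y => exists r : nat -> R, y = \sum_(1 <= i < m.+1) r i * x i.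

Definition subset_of (R : Type) (I J : R -> Prop) : Prop := forall y, I y -> J y.

Definition mult_system (A : comPzRingType) (S : A -> Prop) : Prop :=
  S 1 /\ (forall x y, S x -> S y -> S (x * y)).

(* f : A -> B exhibits B as the localisation A[S^{-1}] (universal
   characterisation up to unique isomorphism). *)
Definition is_localisation (A B : comPzRingType) (S : A -> Prop)
    (f : {rmorphism A -> B}) : Prop :=
  [/\ forall s, S s -> is_unit (f s),
      forall b : B, exists a s, S s /\ b * f s = f a &
      forall a, f a = 0 -> exists s, S s /\ s * a = 0].

Definition upd (R : Type) (g : nat -> R) (k : nat) (v : R) : nat -> R :=
  fun j => if j == k then v else g j.

(* The alternating game in AFSR_d: at round k (k = 1..d-1) choose c_k,
   then for every unit eps_k continue. *)
Fixpoint afsr_game (R : comPzRingType) (d : nat) (b : nat -> R)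
    (n k : nat) (c e : nat -> R) : Prop :=
  match n with
  | 0 => forall M : R -> Prop, is_maximal_ideal M ->
           subset_of (gen_ideal d.-1 (fun i => b i + e i * c i * b d)) M ->
           subset_of (gen_ideal d b) M
  | n'.+1 => exists ck : R, forall ek : R, is_unit ek ->
           afsr_game d b n' k.+1 (upd c k ck) (upd e k ek)
  end.

(* R satisfies AFSR_d; rows (b_1,...,b_d) are given by b 1, ..., b d. *)
Definition AFSR (R : comPzRingType) (d : nat) : Prop :=
  forall b : nat -> R, afsr_game d b d.-1 1 (fun _ => 0) (fun _ => 0).

From HB Require Import structures.
From mathcomp Require Import all_boot all_order all_algebra.
From Stdlib Require Import FunctionalExtensionality.
Local Open Scope ring_scope.
Import GRing.Theory.

(* Whenever the
   winning strategy of A[S^-1] proposes c_k = a / t (a in A, t in S), answer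
   with the unit eps_k = s t, so that eps_k c_k = f (s a) lies in the image of sA.
   At the end of the game the products eps_k c_k are the required elements. *)

Lemma localisation_unit_mul_in_image {A B : comPzRingType} {S : A -> Prop}
    {f : {rmorphism A -> B}} {s : A} :
  mult_system S -> is_localisation S f -> S s ->
  forall c : B, exists2 e : B, is_unit e & exists a : A, e * c = f (s * a).
Proof.
move=> [_ SM] [unitS fracS _] Ss c.
have [a [t [St ct]]] := fracS c.
exists (f (s * t)); first exact/unitS/SM.
by exists a; rewrite rmorphM -mulrA [f t * _]mulrC ct rmorphM.
Qed.

Section AfsrGameImage.

Variables (R : comPzRingType) (T : Type) (g : T -> R) (d : nat) (b : nat -> R).

Hypothesis unit_mul_in_image :
  forall c : R, exists2 e : R, is_unit e & exists x : T, e * c = g x.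

Definition wins_with_image_moves (x : nat -> T) : Prop :=
  forall M : R -> Prop, is_maximal_ideal M ->
    subset_of (gen_ideal d.-1 (fun i => b i + g (x i) * b d)) M ->
    subset_of (gen_ideal d b) M.

Lemma afsr_game_image_move n k (c e : nat -> R) (x : nat -> T) :
  (forall i, e i * c i = g (x i)) -> afsr_game d b n k c e ->
  exists x' : nat -> T, wins_with_image_moves x'.
Proof.
elim: n k c e x => [|n IHn] k c e x ecx /=.
  move=> win; exists x => M maxM.
  suff -> : (fun i => b i + g (x i) * b d) = (fun i => b i + e i * c i * b d).
    exact: win.
  by apply: functional_extensionality => i; rewrite ecx.
move=> [ck win].
have [ek unit_ek [xk ekck]] := unit_mul_in_image ck.
apply: (IHn k.+1 (upd c k ck) (upd e k ek) (upd x k xk)); last exact: win _ unit_ek.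
by move=> i; rewrite /upd; case: (i == k).
Qed.

Lemma AFSR_image_move (x0 : T) :
  g x0 = 0 -> AFSR R d -> exists x : nat -> T, wins_with_image_moves x.
Proof.
move=> gx0 afsr.
apply: (@afsr_game_image_move d.-1 1 _ _ (fun _ => x0)) (afsr b).
by move=> i; rewrite mulr0 gx0.
Qed.

End AfsrGameImage.

Theorem lemma3 (A B : comPzRingType) (S : A -> Prop) (f : {rmorphism A -> B})
    (d : nat) :
  mult_system S -> is_localisation S f -> AFSR B d ->
  forall (b : nat -> B) (s : A), S s ->
    exists a : nat -> A,
      forall M : B -> Prop, is_maximal_ideal M ->
        subset_of (gen_ideal d.-1 (fun i => b i + f (s * a i) * b d)) M ->
        subset_of (gen_ideal d b) M.
Proof.
move=> multS locf afsr b s Ss.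
apply: (@AFSR_image_move _ _ (fun a => f (s * a)) d b _ 0) afsr.
- exact: (localisation_unit_mul_in_image multS locf Ss).
- by rewrite mulr0 rmorph0.
Qed.
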